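(* Let $r\ge 1$ be a real parameter and let $G=(V,E)$ be a graph on $n\ge 2$ vertices with minimum degree at least $r\log n$. Then there exists $W\subseteq V$ with $|W|\ge 2$ such that every edge cut $(A,B)$ in $G[W]$ satisfies $$\Delta(A,B)\ge r\log \operatorname{imb}(A,B).$$
   Context: Graphs are simple and undirected; $\log$ is base $2$. For $W\subseteq V$, $G[W]$ is the subgraph of $G$ induced by $W$. An edge cut in $G[W]$ is a partition $(A,B)$ of $W$ into two nonempty sets. Its maximum degree is $$\Delta(A,B)=\max\Big\{\max_{a\in A}|\{\{a,b\}\in E: b\in B\}|,\ \max_{b\in B}|\{\{b,a\}\in E: a\in A\}|\Big\},$$ and its imbalance is $\operatorname{imb}(A,B)=\dfrac{|A|+|B|}{\min(|A|,|B|)}$. *)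

From mathcomp Require Import all_boot.
From Stdlib Require Import Reals.
Set Implicit Arguments. Unset Strict Implicit. Unset Printing Implicit Defensive.

Definition log2 (x : R) : R := (ln x / ln 2)%R.

Section Graph.
Variable T : finType.
Variable e : rel T.

Definition simple_graph : Prop := symmetric e /\ irreflexive e.

Definition deg (v : T) : nat := #|[set u | e v u]|.

Definition deg_in (S : {set T}) (x : T) : nat := #|[set u in S | e x u]|.

(* (A,B) is an edge cut of G[W]: a partition of W into two nonempty sets *)
Definition edge_cut (W A B : {set T}) : Prop :=
  [/\ A :|: B = W, [disjoint A & B], A != set0 & B != set0].

Definition cut_maxdeg (A B : {set T}) : nat :=
  maxn (\max_(a in A) deg_in B a) (\max_(b in B) deg_in A b).

Definition imb (A B : {set T}) : R :=
  (INR (#|A| + #|B|) / INR (minn #|A| #|B|))%R.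
End Graph.

(** Call [W] log-dense when [|W| >= 2] and every vertex of [W] has at least
    [r log |W|] neighbours inside [W]; the whole vertex set is log-dense by
    hypothesis.  If a cut [(A,B)] of a log-dense [W] with [|A| <= |B|] violates
    the inequality, then each [a] in [A] loses at most [Delta(A,B) < r log(|W|/|A|)]
    neighbours to [B], so it keeps more than [r log |A|] neighbours in [A]; in
    particular [|A| >= 2] (a singleton would need a neighbour of [a] in [{a}]), and
    [A] is a strictly smaller log-dense set.  A minimal log-dense set therefore
    satisfies the inequality for all its cuts. *)
From mathcomp Require Import all_boot.
From Stdlib Require Import Reals Lra Classical.

Set Implicit Arguments.
Unset Strict Implicit.
Unset Printing Implicit Defensive.

Lemma log2_1 : log2 1 = 0%R.
Proof. by rewrite /log2 ln_1 /Rdiv Rmult_0_l. Qed.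

Lemma log2_div (a b : nat) : 0 < a -> 0 < b ->
  log2 (INR a / INR b) = (log2 (INR a) - log2 (INR b))%R.
Proof.
move=> /ltP/lt_0_INR a_gt0 /ltP/lt_0_INR b_gt0.
rewrite /log2 /Rdiv ln_mult ?ln_Rinv //; last exact: Rinv_0_lt_compat.
lra.
Qed.

Section LogDense.
Variables (T : finType) (e : rel T) (r : R).

Lemma deg_inU (A B : {set T}) (x : T) : [disjoint A & B] ->
  deg_in e (A :|: B) x = deg_in e A x + deg_in e B x.
Proof.
move=> dAB; rewrite /deg_in -cardsUI.
have -> : [set u in A | e x u] :&: [set u in B | e x u] = set0.
  have /setP AB0 := disjoint_setI0 dAB.
  by apply/setP=> u; move: (AB0 u); rewrite !inE andbACA andbb => ->.
rewrite cards0 addn0; apply: eq_card => u.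
by rewrite !inE andb_orl.
Qed.

Lemma deg_in_set1 (a : T) : irreflexive e -> deg_in e [set a] a = 0.
Proof.
move=> irr; apply/eqP; rewrite cards_eq0; apply/eqP/setP=> u.
by rewrite !inE; apply/negbTE/andP=> -[/eqP-> ]; rewrite irr.
Qed.

Lemma deg_in_le_cut_maxdeg (A B : {set T}) (a : T) :
  a \in A -> deg_in e B a <= cut_maxdeg e A B.
Proof. by move=> aA; rewrite leq_max (leq_bigmax_cond _ aA). Qed.

Lemma edge_cutC (W A B : {set T}) : edge_cut W A B -> edge_cut W B A.
Proof. by case=> <- dAB A0 B0; split; rewrite // 1?setUC 1?disjoint_sym. Qed.

Lemma card_edge_cut (W A B : {set T}) :
  edge_cut W A B -> #|W| = #|A| + #|B|.
Proof. by case=> <- dAB _ _; rewrite -cardsUI disjoint_setI0 // cards0 addn0. Qed.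

Definition log_dense (W : {set T}) : Prop :=
  2 <= #|W| /\ forall w, w \in W -> (r * log2 (INR #|W|) <= INR (deg_in e W w))%R.

Definition cut_balanced (W : {set T}) : Prop :=
  forall A B : {set T}, edge_cut W A B ->
    (r * log2 (imb A B) <= INR (cut_maxdeg e A B))%R.

Lemma log_dense_small_side (W A B : {set T}) :
  irreflexive e -> log_dense W -> edge_cut W A B -> #|A| <= #|B| ->
  (INR (cut_maxdeg e A B) < r * log2 (imb A B))%R -> log_dense A.
Proof.
move=> irr [_ W_dense] cutW leAB violated.
have [WAB dAB A0 B0] := cutW.
have A_gt0 : 0 < #|A| by rewrite card_gt0.
have W_gt0 : 0 < #|W| by rewrite (card_edge_cut cutW) ltn_addr.
have imbE : imb A B = (INR #|W| / INR #|A|)%R.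
  by rewrite /imb -(card_edge_cut cutW) (minn_idPl leAB).
rewrite imbE log2_div // in violated.
have A_deg a : a \in A -> (r * log2 (INR #|A|) < INR (deg_in e A a))%R.
  move=> aA; have aW : a \in W by rewrite -WAB inE aA.
  have := W_dense a aW; rewrite -WAB deg_inU // plus_INR WAB.
  have /leP/le_INR := deg_in_le_cut_maxdeg B aA; lra.
split=> [|a /A_deg/Rlt_le //].
rewrite ltn_neqAle A_gt0 andbT eq_sym; apply/negP => /cards1P[b defA].
by have := A_deg b; rewrite defA set11 cards1 deg_in_set1 // /= log2_1 => /(_ isT); lra.
Qed.

Lemma log_dense_cut_balanced (W : {set T}) : irreflexive e -> log_dense W ->
  exists2 W' : {set T}, log_dense W' & cut_balanced W'.
Proof.
move=> irr; elim: {W}_.+1 {-2}W (ltnSn #|W|) => // n IH W ltWn W_dense.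
have [|unbalanced] := classic (cut_balanced W); first by exists W.
have [A /not_all_ex_not[B /(@imply_to_and (edge_cut W A B))[cutW]]] :=
  not_all_ex_not _ _ unbalanced.
move=> /Rnot_le_lt violated.
wlog leAB : A B cutW violated / #|A| <= #|B|.
  move=> wlog_small; case: (leqP #|A| #|B|) => [|/ltnW]; first exact: wlog_small.
  by apply: wlog_small (edge_cutC cutW) _; rewrite /cut_maxdeg /imb maxnC minnC addnC.
apply: (IH A); last exact: log_dense_small_side cutW leAB violated.
have B_gt0 : 0 < #|B| by rewrite card_gt0; case: cutW.
by rewrite -ltnS (leq_trans _ ltWn) // (card_edge_cut cutW) ltnS -addn1 leq_add2l.
Qed.

End LogDense.

Theorem lemma2p2 (r : R) (T : finType) (e : rel T) :
  (1 <= r)%R ->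
  simple_graph e ->
  (2 <= #|T|)%N ->
  (forall v : T, (r * log2 (INR #|T|) <= INR (deg e v))%R) ->
  exists W : {set T},
    (2 <= #|W|)%N /\
    forall A B : {set T}, edge_cut W A B ->
      (r * log2 (imb A B) <= INR (cut_maxdeg e A B))%R.
Proof.
move=> _ [_ irr] T_ge2 min_deg.
have setT_dense : log_dense e r [set: T].
  split=> [|v _]; rewrite cardsT //.
  by congr (_ <= INR _)%R: (min_deg v); apply: eq_card => u; rewrite !inE.
have [W [W_ge2 _] W_balanced] := log_dense_cut_balanced irr setT_dense.
by exists W.
Qed.
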